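(* For any set of positions $P\subseteq\mathsf{Pos}(R)$ and any character $\alpha$: (i) $\displaystyle \delta(P,\alpha)=\bigcup_{v\in\tilde N^\odot(P,\alpha)}\delta^\odot(v,\alpha)\;\cup\;\bigcup_{v\in\tilde N^\ast(P,\alpha)}\delta^\ast(v,\alpha)$; (ii) $\delta^\odot(u,\alpha)\cap\delta^\odot(v,\alpha)=\emptyset$ for any two distinct $u,v\in\tilde N^\odot(P,\alpha)$, and $\delta^\ast(u,\alpha)\cap\delta^\ast(v,\alpha)=\emptyset$ for any two distinct $u,v\in\tilde N^\ast(P,\alpha)$; (iii) $\delta^\odot(v,\alpha)\neq\emptyset$ for every $v\in\tilde N^\odot(P,\alpha)$ and $\delta^\ast(v,\alpha)\neq\emptyset$ for every $v\in\tilde N^\ast(P,\alpha)$.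
   Context: A regular expression $R$ over $\Sigma$ (built from $\epsilon$ and characters using $\odot$, $\mid$, $\ast$) is identified with its parse tree; $\odot$- and $\mid$-nodes $v$ have children $\mathsf{left}(v),\mathsf{right}(v)$, a $\ast$-node has one child. Positions $\mathsf{Pos}(R)$ are the character-labeled leaves, $\mathsf{Pos}_\alpha$ those labeled $\alpha$. For a node $v$, $\mathsf{first}(v)$, $\mathsf{last}(v)$ are the sets of positions occurring first/last in a sequence of positions generated by the subexpression rooted at $v$ (leaves treated as distinct symbols); $\mathsf{follow}(R,p)$ is the set of positions that can immediately follow $p$ in a sequence generated by $R$. $\mathsf{firstextent}(p)=\{v: p\in\mathsf{first}(v)\}$, $\mathsf{lastextent}(p)=\{v:p\in\mathsf{last}(v)\}$, and for a set $X$ of positions $\mathsf{firstextent}(X)=\bigcup_{p\in X}\mathsf{firstextent}(p)$, similarly $\mathsf{lastextent}(X)$. State-set transition (ignoring the start state): $\delta(P,\alpha)=\{q\in\mathsf{Pos}_\alpha : q\in\mathsf{follow}(R,p)\text{ for some }p\in P\}$. $\mathsf{lca}$ denotes lowest common ancestor; $\mathsf{lca}(P,\mathsf{Pos}_\alpha)=\{\mathsf{lca}(p,q):p\in P,q\in\mathsf{Pos}_\alpha\}$. $\mathsf{parent}^\ast(v)$ is the lowest ancestor of $v$ (including $v$ itself) that is a $\ast$-node, extended to sets elementwise. Internal transitions: for a $\odot$-node $v$, $\delta^\odot(v,\alpha)=\{q\in\mathsf{Pos}_\alpha:\mathsf{right}(v)\in\mathsf{firstextent}(q)\}$; for a node $v$,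 $\delta^\ast(v,\alpha)=\{q\in\mathsf{Pos}_\alpha:\mathsf{parent}^\ast(v)\in\mathsf{firstextent}(q)\}$. Transition nodes: $N^\odot(P,\alpha)$ is the set of $\odot$-nodes $v$ with $\mathsf{left}(v)\in\mathsf{lastextent}(P)$ and $\mathsf{right}(v)\in\mathsf{firstextent}(\mathsf{Pos}_\alpha)$; $N^\ast(P,\alpha)$ is the set of $\ast$-nodes in $\mathsf{parent}^\ast(\mathsf{lca}(P,\mathsf{Pos}_\alpha))\cap\mathsf{lastextent}(P)\cap\mathsf{firstextent}(\mathsf{Pos}_\alpha)$. A node $v$ is $\ast$-dominated by $u$ if $u$ is a proper ancestor of $v$ and $\mathsf{first}(v)\subseteq\mathsf{first}(u)$; $\tilde N^\ast(P,\alpha)$ is the set of $v\in N^\ast(P,\alpha)$ not $\ast$-dominated by any node of $N^\ast(P,\alpha)$. A node $v$ is $\odot$-dominated by $u$ if $u$ is a proper ancestor of $v$ and $\mathsf{first}(\mathsf{right}(v))\subseteq\mathsf{first}(\mathsf{right}(u))$; $\tilde N^\odot(P,\alpha)$ is the set of $v\in N^\odot(P,\alpha)$ not $\odot$-dominated by any node of $N^\odot(P,\alpha)$. *)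

(* Regular expressions as parse trees; nodes are
   addressed by paths from the root: [::] is the root, rcons v 0 is the left
   (or only, for a star) child of v, rcons v 1 is the right child of v. *)
From mathcomp Require Import all_boot.
Set Implicit Arguments. Unset Strict Implicit. Unset Printing Implicit Defensive.

Inductive re (A : Type) : Type :=
| Eps : re A
| Chr : A -> re A
| Cat : re A -> re A -> re A
| Alt : re A -> re A -> re A
| Star : re A -> re A.
Arguments Eps {A}.

Definition addr := seq nat.

Section RE.
Variable A : Type.
Implicit Types (R r : re A) (u v p q : addr).

Fixpoint subat R v : option (re A) :=
  match v with
  | [::] => Some R
  | d :: v' =>
      match R, d with
      | Cat r1 _, 0 => subat r1 v'
      | Cat _ r2, 1 => subat r2 v'
      | Alt r1 _, 0 => subat r1 v'
      | Alt _ r2, 1 => subat r2 v'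
      | Star r1, 0 => subat r1 v'
      | _, _ => None
      end
  end.

Definition is_node R v : Prop := exists r, subat R v = Some r.
Definition is_cat R v : Prop := exists r1 r2, subat R v = Some (Cat r1 r2).
Definition is_star R v : Prop := exists r1, subat R v = Some (Star r1).

Definition Pos R p : Prop := exists a, subat R p = Some (Chr a).
Definition Pos_a R (a : A) p : Prop := subat R p = Some (Chr a).

(* gen pre r w : the subexpression r, located at address pre, generates the
   sequence of positions w (leaves treated as distinct symbols). *)
Inductive gen : addr -> re A -> seq addr -> Prop :=
| gen_eps pre : gen pre Eps [::]
| gen_chr pre a : gen pre (Chr a) [:: pre]
| gen_cat pre r1 r2 w1 w2 :
    gen (rcons pre 0) r1 w1 -> gen (rcons pre 1) r2 w2 ->
    gen pre (Cat r1 r2) (w1 ++ w2)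
| gen_altl pre r1 r2 w : gen (rcons pre 0) r1 w -> gen pre (Alt r1 r2) w
| gen_altr pre r1 r2 w : gen (rcons pre 1) r2 w -> gen pre (Alt r1 r2) w
| gen_star0 pre r : gen pre (Star r) [::]
| gen_starS pre r w1 w2 :
    gen (rcons pre 0) r w1 -> gen pre (Star r) w2 ->
    gen pre (Star r) (w1 ++ w2).

Definition first R v p : Prop :=
  exists r, subat R v = Some r /\ exists w, gen v r (p :: w).
Definition last R v p : Prop :=
  exists r, subat R v = Some r /\ exists w, gen v r (rcons w p).

Definition follow R p q : Prop :=
  exists w1 w2, gen [::] R (w1 ++ p :: q :: w2).

Definition firstextent R (X : addr -> Prop) v : Prop := exists p, X p /\ first R v p.
Definition lastextent R (X : addr -> Prop) v : Prop := exists p, X p /\ last R v p.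

Definition ancestor u v : Prop := exists s, v = u ++ s.
Definition proper_ancestor u v : Prop := exists s, s <> [::] /\ v = u ++ s.

Fixpoint lca u v : addr :=
  match u, v with
  | a :: u', b :: v' => if a == b then a :: lca u' v' else [::]
  | _, _ => [::]
  end.

(* pstar R v u : u = parent*(v), the lowest ancestor of v (v included) that is
   a star node (undefined, i.e. no such u, if v has no star ancestor). *)
Definition pstar R v u : Prop :=
  ancestor u v /\ is_star R u /\
  forall u', ancestor u' v -> proper_ancestor u u' -> ~ is_star R u'.

Definition delta R (P : addr -> Prop) (a : A) q : Prop :=
  Pos_a R a q /\ exists p, P p /\ follow R p q.

Definition delta_cat R v (a : A) q : Prop :=
  Pos_a R a q /\ firstextent R (fun p => p = q) (rcons v 1).
Definition delta_star R v (a : A) q : Prop :=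
  Pos_a R a q /\ exists u, pstar R v u /\ firstextent R (fun p => p = q) u.

Definition Ncat R (P : addr -> Prop) (a : A) v : Prop :=
  is_cat R v /\ lastextent R P (rcons v 0) /\ firstextent R (Pos_a R a) (rcons v 1).
Definition Nstar R (P : addr -> Prop) (a : A) v : Prop :=
  is_star R v /\
  (exists p q, P p /\ Pos_a R a q /\ pstar R (lca p q) v) /\
  lastextent R P v /\ firstextent R (Pos_a R a) v.

Definition star_dominated R v u : Prop :=
  proper_ancestor u v /\ forall p, first R v p -> first R u p.
Definition cat_dominated R v u : Prop :=
  proper_ancestor u v /\ forall p, first R (rcons v 1) p -> first R (rcons u 1) p.

Definition Nstar_t R P a v : Prop :=
  Nstar R P a v /\ ~ exists u, Nstar R P a u /\ star_dominated R v u.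
Definition Ncat_t R P a v : Prop :=
  Ncat R P a v /\ ~ exists u, Ncat R P a u /\ cat_dominated R v u.

End RE.

From Pilot Require Import Defs.
From mathcomp Require Import all_boot zify.
From Stdlib Require Import Classical.

Set Implicit Arguments. Unset Strict Implicit. Unset Printing Implicit Defensive.

Section Addresses.
Implicit Types (u v x y z : addr).

Lemma ancestor_refl v : ancestor v v.
Proof. by exists [::]; rewrite cats0. Qed.

Lemma ancestor_trans x y z : ancestor x y -> ancestor y z -> ancestor x z.
Proof. by move=> [s ->] [t ->]; exists (s ++ t); rewrite catA. Qed.

Lemma proper_ancestorW x y : proper_ancestor x y -> ancestor x y.
Proof. by move=> [s [_ ->]]; exists s. Qed.

Lemma ancestor_size x y : ancestor x y -> size x <= size y.
Proof. by move=> [s ->]; rewrite size_cat leq_addr. Qed.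

Lemma proper_ancestor_size x y : proper_ancestor x y -> size x < size y.
Proof. by move=> [[|c s] [// _ ->]]; rewrite size_cat /=; lia. Qed.

Lemma ancestor_neq x y : ancestor x y -> x <> y -> proper_ancestor x y.
Proof.
by move=> [s ->] nxy; exists s; split=> // s0; apply: nxy; rewrite s0 cats0.
Qed.

Lemma ancestor_cmp x y z :
  ancestor x z -> ancestor y z -> ancestor x y \/ ancestor y x.
Proof.
move=> [s ->] [t]; elim: x y => [|c x IH] [|d y] /=.
- by left; exists [::].
- by left; exists (d :: y).
- by right; exists (c :: x).
- by case=> -> /IH [[r ->]|[r ->]]; [left|right]; exists r.
Qed.

Lemma ancestor_child x pre d e s :
  ancestor (pre ++ d :: s) x -> ancestor (rcons pre e) x -> d = e.
Proof.
move=> [t1 ->] [t2]; rewrite cat_rcons -catA.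
by elim: pre => [|c pre IH] /= [].
Qed.

Lemma proper_ancestor_rcons u v d e :
  proper_ancestor (rcons u d) (rcons v e) -> proper_ancestor u v.
Proof.
move=> [s [+ E]]; case/lastP: s E => [|s z] // E _.
move: E; rewrite -rcons_cat => /rcons_inj [-> _].
by exists (d :: s); rewrite cat_rcons.
Qed.

Lemma lca_l x y : ancestor (lca x y) x.
Proof.
elim: x y => [|c x IH] [|d y] /=; try by exists [::].
  by exists (c :: x).
case: eqP => _; last by exists (c :: x).
by have [s E] := IH y; exists s; rewrite /= -E.
Qed.

Lemma lca_r x y : ancestor (lca x y) y.
Proof.
elim: x y => [|c x IH] [|d y] /=; try by exists [::].
  by exists (d :: y).
case: eqP => [->|_]; last by exists (d :: y).
by have [s E] := IH y; exists s; rewrite /= -E.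
Qed.

Lemma lca_greatest v x y : ancestor v x -> ancestor v y -> ancestor v (lca x y).
Proof.
move=> [s ->] [t ->]; exists (lca s t).
by elim: v => //= c v ->; rewrite eqxx.
Qed.

End Addresses.

Lemma measure_optimal (T : Type) (m : T -> nat) (N : T -> Prop)
    (better : T -> T -> Prop) :
  (forall u u', N u -> better u' u -> N u' /\ m u' < m u) ->
  forall v, N v -> exists u, N u /\ forall u', ~ better u' u.
Proof.
move=> dec v Nv; have [n le_vn] : exists n, m v <= n by exists (m v).
elim: n v Nv le_vn => [|n IH] v Nv le_vn;
  have [[u' b_u'v]|no_better] := classic (exists u', better u' v);
  try by exists v; split=> // u' b_u'v; apply: no_better; exists u'.
- by have [_] := dec _ _ Nv b_u'v; lia.
- have [Nu' lt_u'v] := dec _ _ Nv b_u'v.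
  by apply: (IH u') => //; lia.
Qed.

Lemma undominated (N : addr -> Prop) (F : addr -> addr -> Prop) v : N v ->
  exists u, (N u /\ forall p, F v p -> F u p) /\
    ~ exists u', N u' /\ proper_ancestor u' u /\ forall p, F u p -> F u' p.
Proof.
move=> Nv.
pose above u := N u /\ forall p, F v p -> F u p.
pose better u' u := N u' /\ proper_ancestor u' u /\ forall p, F u p -> F u' p.
have better_above u u' : above u -> better u' u -> above u' /\ size u' < size u.
  move=> [_ Fvu] [Nu' [/proper_ancestor_size lt Fuu']].
  by split=> //; split=> // p /Fvu /Fuu'.
have [u [Au opt]] := measure_optimal better_above (conj Nv (fun p Fvp => Fvp)).
by exists u; split=> // [[u' b]]; exact: opt b.
Qed.

Lemma cat_cons_split (T : Type) (l1 l2 w1 w2 : seq T) (x : T) :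
  l1 ++ x :: l2 = w1 ++ w2 ->
  (exists t, w1 = l1 ++ x :: t /\ l2 = t ++ w2) \/
  (exists t, l1 = w1 ++ t /\ w2 = t ++ x :: l2).
Proof.
elim: w1 l1 => [|y w1 IH] l1 /=; first by move=> <-; right; exists l1.
case: l1 => [|z l1] /= [<-]; first by move=> ->; left; exists w1.
by case/IH=> [[t [-> ->]]|[t [-> ->]]]; [left|right]; exists t.
Qed.

Section Generation.
Variable A : Type.
Implicit Types (R r : re A) (u v x y : addr) (w l : seq addr).

(* subat recurses on the expression, so the root lookup needs a case split. *)
Lemma subat_nil r : subat r [::] = Some r.
Proof. by case: r. Qed.

Lemma subat_cat R r u s : subat R u = Some r -> subat R (u ++ s) = subat r s.
Proof.
elim: u R => [|d u IH] R /=; first by rewrite subat_nil => -[->].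
by case: R => [|c|r1 r2|r1 r2|r1]; case: d => [|[|d]] //=; exact: IH.
Qed.

Lemma subat_child R r v d : subat R v = Some r -> subat R (rcons v d) = subat r [:: d].
Proof. by rewrite -cats1; exact: subat_cat. Qed.

Lemma gen_ancestor pre r w x : gen pre r w -> x \in w -> ancestor pre x.
Proof.
move=> g; elim: g x => {pre r w} /=.
- by [].
- by move=> pre _ x; rewrite inE => /eqP ->; exact: ancestor_refl.
- move=> pre r1 r2 w1 w2 _ IH1 _ IH2 x; rewrite mem_cat.
  by case/orP=> [/IH1|/IH2]; apply: ancestor_trans; [exists [:: 0]|exists [:: 1]];
    rewrite cats1.
- by move=> pre r1 r2 w _ IH x /IH; apply: ancestor_trans; exists [:: 0]; rewrite cats1.
- by move=> pre r1 r2 w _ IH x /IH; apply: ancestor_trans; exists [:: 1]; rewrite cats1.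
- by [].
- move=> pre r w1 w2 _ IH1 _ IH2 x; rewrite mem_cat; case/orP=> [/IH1|/IH2] //.
  by apply: ancestor_trans; exists [:: 0]; rewrite cats1.
Qed.

Lemma first_ancestor R v p : first R v p -> ancestor v p.
Proof. by move=> [r [_ [w /gen_ancestor]]]; apply; rewrite mem_head. Qed.

Lemma last_ancestor R v p : Defs.last R v p -> ancestor v p.
Proof. by move=> [r [_ [w /gen_ancestor]]]; apply; rewrite mem_rcons mem_head. Qed.

Lemma gen_exists pre r : exists w, gen pre r w.
Proof.
elim: r pre => [|c|r1 IH1 r2 IH2|r1 IH1 r2 _|r1 _] pre.
- by exists [::]; constructor.
- by exists [:: pre]; constructor.
- have [w1 g1] := IH1 (rcons pre 0); have [w2 g2] := IH2 (rcons pre 1).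
  by exists (w1 ++ w2); constructor.
- by have [w g] := IH1 (rcons pre 0); exists w; exact: gen_altl.
- by exists [::]; constructor.
Qed.

Lemma gen_star_cat pre r w1 w2 :
  gen pre (Star r) w1 -> gen pre (Star r) w2 -> gen pre (Star r) (w1 ++ w2).
Proof.
move e: (Star r) => t g; elim: g e w2 => // pre' r' u1 u2 g1 _ _ IH [er] w2 g2.
by subst r'; rewrite -catA; apply: gen_starS => //; exact: IH.
Qed.

Lemma gen_embed r0 r pre s w : subat r0 s = Some r -> gen (pre ++ s) r w ->
  exists w1 w2, gen pre r0 (w1 ++ w ++ w2).
Proof.
elim: s r0 pre => [|d s IH] r0 pre /=.
  by rewrite subat_nil => -[<-]; rewrite cats0 => g; exists [::], [::]; rewrite cats0.
rewrite -cat_rcons; case: r0 => [|c|r1 r2|r1 r2|r1]; case: d => [|[|d]] //= rs g;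
  have [w1 [w2 g']] := IH _ _ rs g.
- have [w3 g3] := gen_exists (rcons pre 1) r2.
  by exists w1, (w2 ++ w3); have := gen_cat g' g3; rewrite -!catA.
- have [w3 g3] := gen_exists (rcons pre 0) r1.
  by exists (w3 ++ w1), w2; have := gen_cat g3 g'; rewrite -!catA.
- by exists w1, w2; exact: gen_altl.
- by exists w1, w2; exact: gen_altr.
- exists w1, w2; rewrite -[_ ++ _ ++ _]cats0.
  by apply: gen_starS => //; constructor.
Qed.

Definition block pre r y r' l1 x l2 : Prop :=
  exists k1 m1 m2 k2, [/\ l1 = k1 ++ m1, l2 = m2 ++ k2,
    gen y r' (m1 ++ x :: m2) &
    forall m, gen y r' m -> gen pre r (k1 ++ m ++ k2)].

Lemma block_root pre r l1 x l2 : gen pre r (l1 ++ x :: l2) -> block pre r pre r l1 x l2.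
Proof.
by move=> g; exists [::], l1, l2, [::]; rewrite cats0; split=> // m; rewrite cats0.
Qed.

Lemma block_extend pre r pre0 r0 y r' (u v : seq addr) l1 x l2 :
  (forall m, gen pre r m -> gen pre0 r0 (u ++ m ++ v)) ->
  block pre r y r' l1 x l2 -> block pre0 r0 y r' (u ++ l1) x (l2 ++ v).
Proof.
move=> ctx [k1 [m1 [m2 [k2 [-> -> gm sub]]]]].
exists (u ++ k1), m1, m2, (k2 ++ v); rewrite -!catA; split=> // m /sub /ctx.
by rewrite -!catA.
Qed.

Lemma occurrence_child pre e r w l1 x l2 d s :
  gen (rcons pre e) r w -> w = l1 ++ x :: l2 -> ancestor (pre ++ d :: s) x -> d = e.
Proof.
move=> g Ew xs; apply: ancestor_child xs (gen_ancestor g _).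
by rewrite Ew mem_cat mem_head orbT.
Qed.

Lemma gen_context pre r l : gen pre r l -> forall l1 x l2 s r',
  l = l1 ++ x :: l2 -> subat r s = Some r' -> ancestor (pre ++ s) x ->
  block pre r (pre ++ s) r' l1 x l2.
Proof.
move=> g; move: (g); elim: g => {pre r l}
  [pre|pre c|pre r1 r2 w1 w2 g1 IH1 g2 IH2|pre r1 r2 w g1 IH1|pre r1 r2 w g2 IH2
  |pre r|pre r w1 w2 g1 IH1 g2 IH2] gl l1 x l2 [|d s] r' El;
  try by move: gl; rewrite El subat_nil cats0 => gl -[<-] _; exact: block_root.
- by case: l1 El.
- by [].
- move=> rs xs; case: (cat_cons_split (esym El)) => [[t [E1 E2]]|[t [E1 E2]]].
  + have d0 := occurrence_child g1 E1 xs; subst d; rewrite -cat_rcons in xs *.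
    rewrite E2 -[l1]cat0s; apply: block_extend (IH1 g1 _ _ _ _ _ E1 rs xs).
    by move=> m gm; exact: gen_cat gm g2.
  + have d1 := occurrence_child g2 E2 xs; subst d; rewrite -cat_rcons in xs *.
    rewrite E1 -[l2]cats0; apply: block_extend (IH2 g2 _ _ _ _ _ E2 rs xs).
    by move=> m gm; rewrite cats0; exact: gen_cat g1 gm.
- move=> rs xs; have d0 := occurrence_child g1 El xs; subst d.
  rewrite -cat_rcons in xs *; rewrite -[l1]cat0s -[l2]cats0.
  apply: block_extend (IH1 g1 _ _ _ _ _ El rs xs).
  by move=> m gm; rewrite cats0; exact: gen_altl.
- move=> rs xs; have d1 := occurrence_child g2 El xs; subst d.
  rewrite -cat_rcons in xs *; rewrite -[l1]cat0s -[l2]cats0.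
  apply: block_extend (IH2 g2 _ _ _ _ _ El rs xs).
  by move=> m gm; rewrite cats0; exact: gen_altr.
- by case: l1 El.
- move=> rs xs; case: (cat_cons_split (esym El)) => [[t [E1 E2]]|[t [E1 E2]]].
  + have d0 := occurrence_child g1 E1 xs; subst d; rewrite -cat_rcons in xs *.
    rewrite E2 -[l1]cat0s; apply: block_extend (IH1 g1 _ _ _ _ _ E1 rs xs).
    by move=> m gm; exact: gen_starS gm g2.
  + rewrite E1 -[l2]cats0; apply: block_extend (IH2 g2 _ _ _ _ _ E2 rs xs).
    by move=> m gm; rewrite cats0; exact: gen_starS g1 gm.
Qed.

End Generation.

Section FirstLast.
Variable A : Type.
Implicit Types (R r : re A) (u v x y : addr) (w : seq addr).

Lemma first_below R x y q : first R x q -> is_node R y -> ancestor x y ->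
  ancestor y q -> first R y q.
Proof.
move=> [rx [Rx [w g]]] [ry Ry] [s Es] yq.
have sr : subat rx s = Some ry by rewrite -(subat_cat s Rx) -Es.
rewrite Es in yq; have [k1 [m1 [m2 [k2 [E1 _ gm _]]]]] :=
  gen_context g (l1 := [::]) erefl sr yq.
case: k1 m1 E1 gm => [|??] [|??] // _ gm.
by exists ry; split=> //; exists m2; rewrite Es.
Qed.

Lemma last_below R x y p : Defs.last R x p -> is_node R y -> ancestor x y ->
  ancestor y p -> Defs.last R y p.
Proof.
move=> [rx [Rx [w g]]] [ry Ry] [s Es] yp.
have sr : subat rx s = Some ry by rewrite -(subat_cat s Rx) -Es.
rewrite -cats1 in g; rewrite Es in yp; have [k1 [m1 [m2 [k2 [_ E2 gm _]]]]] :=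
  gen_context g (l2 := [::]) erefl sr yp.
case: m2 k2 E2 gm => [|??] [|??] // _ gm.
by exists ry; split=> //; exists m1; rewrite Es -cats1.
Qed.

Lemma first_nested R x y q : first R x q -> first R y q -> ancestor x y ->
  forall p, first R y p -> first R x p.
Proof.
move=> [rx [Rx [w g]]] fy [s Es] p [ry [Ry [w' gp]]].
have sr : subat rx s = Some ry by rewrite -(subat_cat s Rx) -Es.
have yq : ancestor (x ++ s) q by rewrite -Es; exact: first_ancestor fy.
have [k1 [m1 [m2 [k2 [E1 _ _ sub]]]]] := gen_context g (l1 := [::]) erefl sr yq.
case: k1 E1 sub => [|??] // _ sub; rewrite Es in gp.
by exists rx; split=> //; exists (w' ++ k2); exact: sub gp.
Qed.

Lemma first_cmp R x y q : first R x q -> first R y q -> x <> y ->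
  (proper_ancestor x y /\ forall p, first R y p -> first R x p) \/
  (proper_ancestor y x /\ forall p, first R x p -> first R y p).
Proof.
move=> fx fy nxy.
case: (ancestor_cmp (first_ancestor fx) (first_ancestor fy)) => [xy|yx].
- by left; split; [exact: ancestor_neq|exact: first_nested fx fy xy].
- right; split; last exact: first_nested fy fx yx.
  by apply: ancestor_neq => // eyx; apply: nxy.
Qed.

End FirstLast.

Section Follow.
Variable A : Type.
Implicit Types (R r : re A) (u v x y : addr) (w : seq addr).

Definition cat_link R v p q : Prop :=
  is_cat R v /\ Defs.last R (rcons v 0) p /\ first R (rcons v 1) q.

Definition star_link R v p q : Prop :=
  is_star R v /\ Defs.last R v p /\ first R v q.

Lemma subat_cat_child R v r1 r2 : subat R v = Some (Cat r1 r2) ->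
  subat R (rcons v 0) = Some r1 /\ subat R (rcons v 1) = Some r2.
Proof. by move=> Rv; rewrite !(subat_child _ Rv) /= !subat_nil. Qed.

Lemma subat_alt_child R v r1 r2 : subat R v = Some (Alt r1 r2) ->
  subat R (rcons v 0) = Some r1 /\ subat R (rcons v 1) = Some r2.
Proof. by move=> Rv; rewrite !(subat_child _ Rv) /= !subat_nil. Qed.

Lemma subat_star_child R v r :
  subat R v = Some (Star r) -> subat R (rcons v 0) = Some r.
Proof. by move=> Rv; rewrite (subat_child _ Rv) /= subat_nil. Qed.

Lemma gen_link R pre r l : gen pre r l -> subat R pre = Some r ->
  forall w1 w2 p q, l = w1 ++ p :: q :: w2 ->
  (exists v, cat_link R v p q) \/ (exists v, star_link R v p q).
Proof.
elim=> {pre r l}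
  [pre|pre c|pre r1 r2 u1 u2 g1 IH1 g2 IH2|pre r1 r2 u g1 IH1|pre r1 r2 u g2 IH2
  |pre r|pre r u1 u2 g1 IH1 g2 IH2] Rpre w1 w2 p q El.
- by case: w1 El.
- by case: w1 El => [|? [|??]].
- have [R0 R1] := subat_cat_child Rpre.
  case: (cat_cons_split (esym El)) => [[[|y t] [E1 E2]]|[t [E1 E2]]].
  + left; exists pre; split; first by exists r1, r2.
    rewrite cats1 /= in E1 E2; subst u1 u2.
    by split; [exists r1; split=> //; exists w1|exists r2; split=> //; exists w2].
  + by case: E2 => eq_yq E2; subst y; apply: (IH1 R0 w1 t).
  + exact: (IH2 R1 t w2).
- exact: (IH1 (subat_alt_child Rpre).1 w1 w2).
- exact: (IH2 (subat_alt_child Rpre).2 w1 w2).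
- by case: w1 El.
- case: (cat_cons_split (esym El)) => [[[|y t] [E1 E2]]|[t [E1 E2]]].
  + right; exists pre; split; first by exists r.
    rewrite cats1 /= in E1 E2; subst u1 u2.
    split; exists (Star r); split=> //; last by exists w2.
    by exists w1; rewrite -[rcons _ _]cats0; apply: gen_starS => //; constructor.
  + by case: E2 => eq_yq E2; subst y; apply: (IH1 (subat_star_child Rpre) w1 t).
  + exact: (IH2 Rpre t w2).
Qed.

Lemma follow_of_block R v r (u u' : seq addr) p q : subat R v = Some r ->
  gen v r (rcons u p ++ q :: u') -> follow R p q.
Proof.
move=> Rv g; have [w1 [w2 g']] := gen_embed (pre := [::]) Rv g.
by exists (w1 ++ u), (u' ++ w2); move: g'; rewrite cat_rcons -!catA.
Qed.

Lemma follow_link R p q : follow R p q <->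
  (exists v, cat_link R v p q) \/ (exists v, star_link R v p q).
Proof.
split.
  by move=> [w1 [w2 g]]; exact: gen_link g (subat_nil R) _ _ _ _ erefl.
case=> [[v [[r1 [r2 Rv]] [[rl [Rl [u gl]]] [rr [Rr [u' gr]]]]]]
       |[v [[r Rv] [[rl [Rl [u gl]]] [rr [Rr [u' gr]]]]]]].
- have [R0 R1] := subat_cat_child Rv.
  rewrite R0 in Rl; rewrite R1 in Rr; case: Rl Rr gl gr => <- [<-] gl gr.
  exact: follow_of_block Rv (gen_cat gl gr).
- rewrite Rv in Rl Rr; case: Rl Rr gl gr => <- [<-] gl gr.
  exact: follow_of_block Rv (gen_star_cat gl gr).
Qed.

End Follow.

Section Transitions.
Variable A : Type.
Implicit Types (R r : re A) (u v x y : addr) (P : addr -> Prop) (a : A).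

Lemma star_node R v : is_star R v -> is_node R v.
Proof. by move=> [r Rv]; exists (Star r). Qed.

Lemma pstar_self R v : is_star R v -> pstar R v v.
Proof.
move=> sv; split; first exact: ancestor_refl.
by split=> // u' /ancestor_size le /proper_ancestor_size lt; lia.
Qed.

Lemma pstar_of_star R v u : is_star R v -> pstar R v u -> u = v.
Proof.
move=> sv [uv [_ lowest]]; apply: NNPP => nuv.
exact: lowest v (ancestor_refl v) (ancestor_neq uv nuv) sv.
Qed.

Lemma pstar_exists R x v : ancestor v x -> is_star R v ->
  exists u, pstar R x u /\ ancestor v u.
Proof.
move=> vx sv.
pose below u := ancestor u x /\ is_star R u /\ ancestor v u.
pose lower u' u := ancestor u' x /\ proper_ancestor u u' /\ is_star R u'.
have lower_below u u' : below u -> lower u' u ->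
    below u' /\ size x - size u' < size x - size u.
  move=> [_ [_ vu]] [u'x [uu' su']]; split.
    by split=> //; split=> //; exact: ancestor_trans vu (proper_ancestorW uu').
  by have := ancestor_size u'x; have := proper_ancestor_size uu'; lia.
have [u [[ux [su vu]] opt]] :=
  measure_optimal lower_below (conj vx (conj sv (ancestor_refl v))).
by exists u; split=> //; split=> //; split=> // u' u'x uu' su'; exact: (opt u').
Qed.

Lemma star_link_lowest R v p q : star_link R v p q ->
  exists w, pstar R (lca p q) w /\ star_link R w p q.
Proof.
move=> [sv [lp fq]].
have vl := lca_greatest (last_ancestor lp) (first_ancestor fq).
have [w [pw vw]] := pstar_exists vl sv; have [wl [sw _]] := pw.
exists w; split=> //; split=> //; split.
- exact: last_below lp (star_node sw) vw (ancestor_trans wl (lca_l p q)).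
- exact: first_below fq (star_node sw) vw (ancestor_trans wl (lca_r p q)).
Qed.

Lemma delta_transition_nodes R P a q : delta R P a q <->
  (exists v, Ncat_t R P a v /\ delta_cat R v a q) \/
  (exists v, Nstar_t R P a v /\ delta_star R v a q).
Proof.
split.
- move=> [aq [p [Pp /follow_link [[v [cv [lp fq]]]|[v0 /star_link_lowest sl]]]]].
  + have Nv : Ncat R P a v by split=> //; split; [exists p|exists q].
    have [u [[Nu fvu] ndu]] := undominated (fun v => first R (rcons v 1)) Nv.
    by left; exists u; split; [split|split=> //; exists q; split=> //; exact: fvu].
  + have [v [pv [sv [lp fq]]]] := sl.
    have Nv : Nstar R P a v.
      by split=> //; split; [exists p, q|split; [exists p|exists q]].
    have [u [[Nu fvu] ndu]] := undominated (first R) Nv.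
    right; exists u; split; first by split.
    split=> //; exists u; split; first exact: pstar_self Nu.1.
    by exists q; split=> //; exact: fvu.
- case=> [[v [[[cv [[p [Pp lp]] _]] _] [aq [q' [-> fq]]]]]
         |[v [[[sv [_ [[p [Pp lp]] _]]] _] [aq [u [pvu [q' [-> fq]]]]]]]].
  + by split=> //; exists p; split=> //; apply/follow_link; left; exists v.
  + rewrite (pstar_of_star sv pvu) in fq.
    by split=> //; exists p; split=> //; apply/follow_link; right; exists v.
Qed.

(* Part (ii), concatenation nodes: distinct undominated nodes have disjoint
   internal transitions, since a shared target makes one dominate the other. *)
Lemma delta_cat_disjoint R P a u v q : Ncat_t R P a u -> Ncat_t R P a v ->
  u <> v -> ~ (delta_cat R u a q /\ delta_cat R v a q).
Proof.
move=> [Nu ndu] [Nv ndv] nuv [[_ [q1 [-> fu]]] [_ [q2 [-> fv]]]].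
have nuv1 : rcons u 1 <> rcons v 1 by move/rcons_inj=> [].
case: (first_cmp fu fv nuv1) => [[uv sub]|[vu sub]].
- by apply: ndv; exists u; split=> //; split=> //; exact: proper_ancestor_rcons uv.
- by apply: ndu; exists v; split=> //; split=> //; exact: proper_ancestor_rcons vu.
Qed.

Lemma delta_star_disjoint R P a u v q : Nstar_t R P a u -> Nstar_t R P a v ->
  u <> v -> ~ (delta_star R u a q /\ delta_star R v a q).
Proof.
move=> [Nu ndu] [Nv ndv] nuv
  [[_ [u' [pu [q1 [-> fu]]]]] [_ [v' [pv [q2 [-> fv]]]]]].
rewrite (pstar_of_star Nv.1 pv) in fv; rewrite (pstar_of_star Nu.1 pu) in fu.
case: (first_cmp fu fv nuv) => [[uv sub]|[vu sub]].
- by apply: ndv; exists u.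
- by apply: ndu; exists v.
Qed.

End Transitions.

Theorem lemma3 (A : Type) (R : re A) (P : addr -> Prop) (a : A) :
  (forall p, P p -> Pos R p) ->
  (* (i) *)
  (forall q, delta R P a q <->
     (exists v, Ncat_t R P a v /\ delta_cat R v a q) \/
     (exists v, Nstar_t R P a v /\ delta_star R v a q)) /\
  (* (ii) *)
  (forall u v, Ncat_t R P a u -> Ncat_t R P a v -> u <> v ->
     forall q, ~ (delta_cat R u a q /\ delta_cat R v a q)) /\
  (forall u v, Nstar_t R P a u -> Nstar_t R P a v -> u <> v ->
     forall q, ~ (delta_star R u a q /\ delta_star R v a q)) /\
  (* (iii) *)
  (forall v, Ncat_t R P a v -> exists q, delta_cat R v a q) /\
  (forall v, Nstar_t R P a v -> exists q, delta_star R v a q).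
Proof.
move=> _; split; [move=> q; apply: delta_transition_nodes|split; [|split; [|split]]].
- by move=> u v Nu Nv nuv q; exact: delta_cat_disjoint Nu Nv nuv.
- by move=> u v Nu Nv nuv q; exact: delta_star_disjoint Nu Nv nuv.
- by move=> v [[_ [_ [q [aq fq]]]] _]; exists q; split=> //; exists q.
- move=> v [[sv [_ [_ [q [aq fq]]]]] _]; exists q; split=> //.
  by exists v; split; [exact: pstar_self|exists q].
Qed.
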